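(* Let $H_{KR}=[h_1\cdots h_{51}]=[I_{10}\ M_{KR}]$ be the $10\times 51$ binary matrix, where $I_{10}$ is the identity matrix (so $h_i$ is the $i$-th unit vector for $i\le10$) and $h_{11},\dots,h_{51}$ are, in order, the columns of $M_{KR}$ given in hexadecimal as 1B6, 193, 1CC, 187, 1F6, F7, 16E, 140, 3C, 296, 22F, 303, 381, 365, 11D, 1A3, 274, 2F2, 254, 56, F, 41, 357, 208, 34, 329, 28D, 31D, 3D5, 129, 3D7, B7, 3EC, 2E2, 23C, AD, 34E, 155, 2E6, 371, D4 (each hexadecimal number written as a 10-bit binary string, most significant bit as the top entry; e.g. 1B6 $=(0,1,1,0,1,1,0,1,1,0)^T$). Let $\mathcal P_{KR}$ be the partition of the column indices into the 11 subsets $\{5,13,43\}$, $\{20,27\}$, $\{3,29,33,39,41,48,51\}$, $\{1,7,19,25,34,45\}$, $\{2,4,18\}$, $\{6,8,12,26,28,35,44\}$, $\{9,22,23,30\}$, $\{10,11,15,16,32,42\}$, $\{14,24,49,50\}$, $\{17,21,31,37,46,47\}$, $\{36,38,40\}$. Then (i) $\mathcal P_{KR}$ is a $2$-partition of $H_{KR}$: every nonzero vector of $\mathbb{F}_2^{10}$ is a column of $H_{KR}$ or the sum of two columns of $H_{KR}$ lying in distinct subsets of $\mathcal P_{KR}$; (ii) the code with parity-check matrix $H_{KR}$ has minimum distance $3$, and $h_5+h_{27}+h_{29}=0$, where $h_5,h_{27},h_{29}$ lie in three distinct subsets of $\mathcal P_{KR}$.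
   Context: For an $r\times n$ parity-check matrix $H$ of a binary code of covering radius $2$ and minimum distance $\ge3$, a $2$-partition is a partition of the column set of $H$ into nonempty subsets such that every vector of $\mathbb{F}_2^r$ is the sum of at most $2$ columns of $H$ lying in pairwise distinct subsets (the zero vector being the empty sum). *)

From HB Require Import structures.
From mathcomp Require Import all_boot all_order all_algebra.
Set Implicit Arguments. Unset Strict Implicit. Unset Printing Implicit Defensive.
Import GRing.Theory.
Local Open Scope ring_scope.

(* Columns of H_KR indexed 1..51 (paper's 1-based convention). *)

Definition MKR_hex : seq nat :=
  [:: 0x1B6; 0x193; 0x1CC; 0x187; 0x1F6; 0xF7; 0x16E; 0x140; 0x3C; 0x296;
      0x22F; 0x303; 0x381; 0x365; 0x11D; 0x1A3; 0x274; 0x2F2; 0x254; 0x56;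
      0xF; 0x41; 0x357; 0x208; 0x34; 0x329; 0x28D; 0x31D; 0x3D5; 0x129;
      0x3D7; 0xB7; 0x3EC; 0x2E2; 0x23C; 0xAD; 0x34E; 0x155; 0x2E6; 0x371; 0xD4]%N.

Definition hexcol (n : nat) : 'cV['F_2]_10 :=
  \col_(i < 10) (((n %/ 2 ^ (9 - i)) %% 2)%N)%:R.

Definition unitcol (k : nat) : 'cV['F_2]_10 :=
  \col_(i < 10) (i.+1 == k)%:R.

Definition hKR (j : nat) : 'cV['F_2]_10 :=
  if (j <= 10)%N then unitcol j else hexcol (nth 0%N MKR_hex (j - 11)).

Definition H_KR : 'M['F_2]_(10, 51) := \matrix_(i < 10, j < 51) hKR j.+1 i ord0.

Definition P_KR : seq (seq nat) :=
  [:: [:: 5; 13; 43];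
      [:: 20; 27];
      [:: 3; 29; 33; 39; 41; 48; 51];
      [:: 1; 7; 19; 25; 34; 45];
      [:: 2; 4; 18];
      [:: 6; 8; 12; 26; 28; 35; 44];
      [:: 9; 22; 23; 30];
      [:: 10; 11; 15; 16; 32; 42];
      [:: 14; 24; 49; 50];
      [:: 17; 21; 31; 37; 46; 47];
      [:: 36; 38; 40]]%N.

Definition is_partition (P : seq (seq nat)) (n : nat) : Prop :=
  perm_eq (flatten P) (iota 1 n) /\ all (fun B => size B != 0%N) P.

Definition distinct_blocks (P : seq (seq nat)) (j k : nat) : bool :=
  ~~ has (fun B => (j \in B) && (k \in B)) P.

Definition colj (r n : nat) (H : 'M['F_2]_(r, n)) (j : nat) : 'cV['F_2]_r :=
  \col_(i < r) (if insub j.-1 is Some jj then H i jj else 0).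

(* 2-partition: every vector of F_2^r is the sum of at most 2 columns of H
   lying in pairwise distinct subsets of P (the zero vector = empty sum). *)
Definition two_partition (r n : nat) (H : 'M['F_2]_(r, n)) (P : seq (seq nat)) : Prop :=
  is_partition P n /\
  forall v : 'cV['F_2]_r,
    v = 0 \/
    (exists j, (1 <= j <= n)%N /\ v = colj H j) \/
    (exists j k, (1 <= j <= n)%N /\ (1 <= k <= n)%N /\ distinct_blocks P j k
                 /\ v = colj H j + colj H k).

Definition codeword (r n : nat) (H : 'M['F_2]_(r, n)) (c : 'rV['F_2]_n) : bool :=
  H *m c^T == 0.

Definition wt (n : nat) (c : 'rV['F_2]_n) : nat := #|[set j : 'I_n | c ord0 j != 0]|.

Definition min_distance (r n : nat) (H : 'M['F_2]_(r, n)) (d : nat) : Prop :=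
  (exists c, codeword H c /\ c != 0 /\ wt c = d) /\
  (forall c, codeword H c -> c != 0 -> (d <= wt c)%N).

From mathcomp Require Import all_boot all_order all_algebra.
Set Implicit Arguments. Unset Strict Implicit. Unset Printing Implicit Defensive.
Import GRing.Theory.
Local Open Scope ring_scope.

(* Everything reduces to a finite computation in F_2^10 once a vector is encoded
   as the 10-bit word of its entries, sums becoming bitwise xor.  The 2-partition
   property is certified by running through all 1024 words and finding each
   nonzero one among the columns or among the xors of two columns from distinct
   blocks.  Since the columns are nonzero and pairwise distinct, no codeword has
   weight 1 or 2, and h_5 + h_27 + h_29 = 0 yields a codeword of weight 3. *)

Lemma pchar_F2 : (2 \in [pchar 'F_2])%N.
Proof. exact: pchar_Fp. Qed.

Lemma F2_neq0_natr (x : 'F_2) : (x != 0)%:R = x.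
Proof. by case: x => [[|[|m]] lt] //; apply/val_inj. Qed.

Lemma F2_neq0 (x : 'F_2) : x != 0 -> x = 1.
Proof. by move=> nz; rewrite -[x]F2_neq0_natr nz. Qed.

Lemma F2_natr_addb (a b : bool) : ((a (+) b : nat)%:R : 'F_2) = a%:R + b%:R.
Proof. by case: a; case: b; rewrite /= ?addr0 ?add0r ?(addrr_pchar2 pchar_F2). Qed.

Lemma mxF2_addrr m k (A : 'M['F_2]_(m, k)) : A + A = 0.
Proof. by apply/matrixP => i j; rewrite !mxE (addrr_pchar2 pchar_F2). Qed.

Section Words.

Variable r : nat.

Definition word_col (w : seq bool) : 'cV['F_2]_r := \col_(i < r) (nth false w i)%:R.

Definition col_word (v : 'cV['F_2]_r) : seq bool := [seq v i 0 != 0 | i <- enum 'I_r].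

Definition xorw (s t : seq bool) : seq bool := [seq x.1 (+) x.2 | x <- zip s t].

Lemma size_col_word v : size (col_word v) = r.
Proof. by rewrite size_map size_enum_ord. Qed.

Lemma col_wordK : cancel col_word word_col.
Proof.
move=> v; apply/matrixP => i k; rewrite mxE (ord1 k).
by rewrite (nth_map i) ?size_enum_ord // nth_ord_enum F2_neq0_natr.
Qed.

Lemma word_col_nseq0 m : word_col (nseq m false) = 0.
Proof. by apply/matrixP => i k; rewrite !mxE nth_nseq if_same. Qed.

Lemma word_col_inj s t :
  size s = r -> size t = r -> word_col s = word_col t -> s = t.
Proof.
move=> sr tr /matrixP eq_st; apply: (eq_from_nth (x0 := false)) => [|i]; first by rewrite sr tr.
rewrite sr => lt_ir; have := eq_st (Ordinal lt_ir) 0; rewrite !mxE /=.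
by case: (nth false s i); case: (nth false t i) => // /eqP; rewrite ?oner_eq0 // eq_sym oner_eq0.
Qed.

Lemma word_colD s t :
  size s = size t -> word_col s + word_col t = word_col (xorw s t).
Proof.
move=> st; apply/matrixP => i k; rewrite !mxE.
have [lt_is | le_si] := ltnP i (size s).
  by rewrite (nth_map (false, false)) ?size_zip ?st ?minnn -?st // nth_zip // F2_natr_addb.
by rewrite !nth_default ?size_map ?size_zip -?st ?minnn ?addr0.
Qed.

End Words.

Fixpoint words (m : nat) : seq (seq bool) :=
  if m is m'.+1 then [seq b :: w | b <- [:: false; true], w <- words m'] else [:: [::]].

Lemma mem_words w : w \in words (size w).
Proof.
elim: w => //= b w IHw.
by case: b; rewrite /= !mem_cat map_f ?orbT.
Qed.

Lemma colj_col r n (H : 'M['F_2]_(r, n)) (j : 'I_n) : colj H j.+1 = col j H.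
Proof.
apply/matrixP => i k; rewrite !mxE /=.
by case: insubP => [jj _ /val_inj -> | /negP[]] //=; rewrite ltn_ord.
Qed.

Definition covered_by_two r n (H : 'M['F_2]_(r, n)) (P : seq (seq nat)) : Prop :=
  forall v : 'cV['F_2]_r, v != 0 ->
    (exists j, (1 <= j <= n)%N /\ v = colj H j) \/
    (exists j k, (1 <= j <= n)%N /\ (1 <= k <= n)%N /\ distinct_blocks P j k
                 /\ v = colj H j + colj H k).

Lemma two_partition_cover r n (H : 'M['F_2]_(r, n)) P :
  is_partition P n -> covered_by_two H P -> two_partition H P.
Proof.
move=> partP cover; split=> // v.
by have [->|/cover] := eqVneq v 0; [left | right].
Qed.

(* Word positions in [cs] are 0-based, whereas [P] refers to columns 1-based. *)
Definition distinct_block_sums (P : seq (seq nat)) (cs : seq (seq bool)) : seq (seq bool) :=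
  [seq xorw (nth [::] cs jk.1) (nth [::] cs jk.2)
  | jk <- [seq (j, k) | j <- iota 0 (size cs), k <- iota 0 (size cs)]
  & distinct_blocks P jk.1.+1 jk.2.+1].

Definition covered_by_twob (r : nat) (P : seq (seq nat)) (cs : seq (seq bool)) : bool :=
  let sums := cs ++ distinct_block_sums P cs in
  all (fun w => (w == nseq r false) || (w \in sums)) (words r).

Section ColumnWords.

Variables (r n : nat) (H : 'M['F_2]_(r, n)) (cs : seq (seq bool)).
Hypothesis size_cs : size cs = n.
Hypothesis size_cs_words : all (fun w => size w == r) cs.
Hypothesis col_cs : forall j : 'I_n, col j H = word_col r (nth [::] cs j).

Lemma size_nth_cs j : (j < n)%N -> size (nth [::] cs j) = r.
Proof. by move=> lt_jn; apply/eqP/(allP size_cs_words)/mem_nth; rewrite size_cs. Qed.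

Lemma colj_cs j : (j < n)%N -> colj H j.+1 = word_col r (nth [::] cs j).
Proof. by move=> lt_jn; rewrite (colj_col H (Ordinal lt_jn)) col_cs. Qed.

Lemma col_cs_neq0 : nseq r false \notin cs -> forall j, col j H != 0.
Proof.
move=> cs0 j; rewrite col_cs -(word_col_nseq0 r r); apply: contraNneq cs0.
move/word_col_inj => <-; rewrite ?size_nseq ?size_nth_cs //.
by apply: mem_nth; rewrite size_cs.
Qed.

Lemma col_cs_inj : uniq cs -> injective (fun j => col j H).
Proof.
move=> uniq_cs j k; rewrite !col_cs => /word_col_inj.
rewrite !size_nth_cs // => /(_ erefl erefl) /eqP.
by rewrite nth_uniq ?size_cs // => /eqP/val_inj.
Qed.

Lemma covered_by_two_words P : covered_by_twob r P cs -> covered_by_two H P.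
Proof.
move=> /allP covered v v_neq0; rewrite -(col_wordK v).
have := mem_words (col_word v); rewrite size_col_word => /covered.
case/orP=> [/eqP v0 | ]; first by move: v_neq0; rewrite -(col_wordK v) v0 word_col_nseq0 eqxx.
rewrite mem_cat => /orP[v_cs | /mapP[[j k]]].
  left; exists (index (col_word v) cs).+1.
  have lt_vn : (index (col_word v) cs < n)%N by rewrite -size_cs index_mem.
  by rewrite colj_cs // nth_index.
rewrite mem_filter /= => /andP[dist_jk /allpairsP[[j' k'] [/= j_in k_in [eq_j eq_k]]]] ->.
move: j_in k_in; rewrite -eq_j -eq_k !mem_iota /= add0n size_cs => lt_jn lt_kn.
right; exists j.+1, k.+1.
do 3 split => //.
by rewrite !colj_cs // word_colD ?size_nth_cs.
Qed.

End ColumnWords.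

Section MinimumDistance.

Variables (r n : nat) (H : 'M['F_2]_(r, n)).

Lemma mul_trF2 (c : 'rV['F_2]_n) :
  H *m c^T = \sum_(j in [set j | c ord0 j != 0]) col j H.
Proof.
apply/matrixP => i k; rewrite !mxE summxE [RHS]big_mkcond; apply: eq_bigr => j _.
rewrite !mxE (ord1 k) inE; have [->|/F2_neq0 ->] := eqVneq (c ord0 j) 0.
  by rewrite mulr0.
by rewrite mulr1.
Qed.

Lemma wt_eq0 (c : 'rV['F_2]_n) : wt c = 0%N -> c = 0.
Proof.
move/eqP; rewrite cards_eq0 => /eqP supp0; apply/matrixP => i j; rewrite (ord1 i) mxE.
apply/eqP/negPn/negP => c_j.
have : j \in [set j | c ord0 j != 0] by rewrite inE.
by rewrite supp0 inE.
Qed.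

Lemma codeword_wt3 (a b d : 'I_n) :
  uniq [:: a; b; d] -> col a H + col b H + col d H = 0 ->
  exists c, codeword H c /\ c != 0 /\ wt c = 3%N.
Proof.
rewrite /= !inE negb_or => /and3P[/andP[ab ad] bd _] sum0.
pose c : 'rV['F_2]_n := \row_j (j \in (a |: (b |: [set d])))%:R.
have supp_c : [set j | c ord0 j != 0] = (a |: (b |: [set d])).
  by apply/setP => j; rewrite inE mxE; case: (j \in _); rewrite ?oner_eq0 ?eqxx.
exists c; split; last split.
- rewrite /codeword mul_trF2 supp_c !big_setU1 ?big_set1 ?inE ?negb_or ?ab ?ad ?bd //=.
  by rewrite addrA sum0.
- apply/eqP => /matrixP/(_ ord0 a); rewrite !mxE !inE eqxx => /eqP; by rewrite oner_eq0.
- by rewrite /wt supp_c !cardsU1 cards1 !inE negb_or ab ad bd.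
Qed.

Hypothesis col_neq0 : forall j, col j H != 0.
Hypothesis col_inj : injective (fun j => col j H).

Lemma codeword_wt_ge3 c : codeword H c -> c != 0 -> (3 <= wt c)%N.
Proof.
rewrite /codeword mul_trF2 => /eqP sum0 c_neq0; rewrite leqNgt; apply/negP => wt_lt3.
have wt_neq0 : wt c != 0%N by apply: contra_neq c_neq0; apply: wt_eq0.
have : (wt c == 1%N) || (wt c == 2%N) by move: wt_lt3 wt_neq0; case: (wt c) => [|[|[|]]].
case/orP => [/cards1P[a supp_a] | /cards2P[a [b [ab supp_ab]]]].
- by move: sum0; rewrite supp_a big_set1 => /eqP; rewrite (negbTE (col_neq0 a)).
- move: sum0; rewrite supp_ab big_setU1 ?big_set1 ?inE //=.
  move/(congr1 (+%R^~ (col b H))); rewrite -addrA mxF2_addrr addr0 add0r.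
  by move/col_inj => eq_ab; rewrite eq_ab eqxx in ab.
Qed.

End MinimumDistance.

Lemma min_distance3 r n (H : 'M['F_2]_(r, n)) (a b d : 'I_n) :
  (forall j, col j H != 0) -> injective (fun j => col j H) ->
  uniq [:: a; b; d] -> col a H + col b H + col d H = 0 -> min_distance H 3.
Proof.
move=> col_neq0 col_inj abd sum0; split; first exact: codeword_wt3 abd sum0.
exact: codeword_wt_ge3.
Qed.

Definition unit_word (k : nat) : seq bool := [seq i.+1 == k | i <- iota 0 10].

Definition hex_word (x : nat) : seq bool := [seq odd (x %/ 2 ^ (9 - i)) | i <- iota 0 10].

Definition KR_words : seq (seq bool) :=
  [seq if (j <= 10)%N then unit_word j else hex_word (nth 0%N MKR_hex (j - 11))
  | j <- iota 1 51].

Lemma col_KR_words (j : 'I_51) : col j H_KR = word_col 10 (nth [::] KR_words j).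
Proof.
apply/matrixP => i k; rewrite !mxE (nth_map 0%N) ?size_iota // nth_iota // /hKR add1n.
case: (j.+1 <= 10)%N; rewrite !mxE (nth_map 0%N) ?size_iota // nth_iota //.
by rewrite modn2.
Qed.

Lemma KR_words_shape :
  [&& size KR_words == 51, all (fun w => size w == 10) KR_words,
      uniq KR_words & nseq 10 false \notin KR_words].
Proof. by vm_compute. Qed.

Lemma KR_covered_by_twob : covered_by_twob 10 P_KR KR_words.
Proof. by vm_compute. Qed.

Lemma KR_covered_by_two : covered_by_two H_KR P_KR.
Proof.
have /and4P[/eqP size_KR size_KR_words _ _] := KR_words_shape.
exact (covered_by_two_words size_KR size_KR_words col_KR_words KR_covered_by_twob).
Qed.

Lemma KR_col_sum3 :
  col (@Ordinal 51 4 isT) H_KR + col (@Ordinal 51 26 isT) H_KR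
  + col (@Ordinal 51 28 isT) H_KR = 0.
Proof.
rewrite !col_KR_words !word_colD; try by vm_compute.
by rewrite -(word_col_nseq0 10 10); congr word_col; vm_compute.
Qed.

Lemma KR_colj_sum3 : colj H_KR 5 + colj H_KR 27 + colj H_KR 29 = 0.
Proof.
by rewrite (colj_col H_KR (@Ordinal 51 4 isT)) (colj_col H_KR (@Ordinal 51 26 isT))
           (colj_col H_KR (@Ordinal 51 28 isT)) KR_col_sum3.
Qed.

Lemma KR_min_distance : min_distance H_KR 3.
Proof.
have /and4P[/eqP size_KR size_KR_words uniq_KR KR_neq0] := KR_words_shape.
apply: min_distance3 KR_col_sum3; last by vm_compute.
- exact: col_cs_neq0 size_KR_words col_KR_words KR_neq0.
- exact: col_cs_inj size_KR size_KR_words col_KR_words uniq_KR.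
Qed.

Lemma KR_partition : is_partition P_KR 51.
Proof. by split; vm_compute. Qed.

Theorem theorem5p2 :
  two_partition H_KR P_KR /\
  (forall v : 'cV['F_2]_10, v != 0 ->
     (exists j, (1 <= j <= 51)%N /\ v = colj H_KR j) \/
     (exists j k, (1 <= j <= 51)%N /\ (1 <= k <= 51)%N /\ distinct_blocks P_KR j k
                  /\ v = colj H_KR j + colj H_KR k)) /\
  min_distance H_KR 3 /\
  colj H_KR 5 + colj H_KR 27 + colj H_KR 29 = 0 /\
  distinct_blocks P_KR 5 27 /\ distinct_blocks P_KR 5 29 /\ distinct_blocks P_KR 27 29.
Proof.
split; first exact: two_partition_cover KR_partition KR_covered_by_two.
split; first exact: KR_covered_by_two.
split; first exact: KR_min_distance.
split; first exact: KR_colj_sum3.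
by vm_compute.
Qed.
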